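(* Let $k\ge 1$ be an integer and let $G$ be a bipartite graph with bipartition $V(G)=A\cup B$, $|A|=k$, $|B|=k+1$, such that every $v\in A$ has $\deg(v)\ge 1$ and $\deg(v)>\deg(u)$ for every $u\in N(v)$. Then $G=K_{k,k+1}$ (i.e., every vertex of $A$ is adjacent to every vertex of $B$).
   Context: Degrees and neighborhoods $N(v)$ are taken in $G$. *)

From mathcomp Require Import all_boot.
Set Implicit Arguments. Unset Strict Implicit. Unset Printing Implicit Defensive.

Definition simple_graph (T : finType) (e : rel T) : Prop :=
  symmetric e /\ irreflexive e.

Definition nbhd (T : finType) (e : rel T) (v : T) : {set T} := [set u | e v u].
Definition deg (T : finType) (e : rel T) (v : T) : nat := #|nbhd e v|.

Definition bipartition (T : finType) (e : rel T) (A B : {set T}) : Prop :=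
  [/\ [disjoint A & B], A :|: B = [set: T] &
      forall u v, e u v -> (u \in A) = (v \in B)].

From mathcomp Require Import all_boot all_order all_algebra.
From mathcomp Require Import ring zify.

(* Give the edge ab (a in A, b in B) the weight 1/d(b) - 1/d(a).  The terms
   1/d(b) add up to at most 1 at each b in B and the terms 1/d(a) to exactly 1
   at each a in A, so the total weight is at most |B| - |A| = 1.  Around a
   fixed a in A, the d(a) neighbours have degree at most d(a) - 1, so the
   edges at a weigh at least 1/(d(a) - 1) >= 1/k, strictly if a misses some
   vertex of B; hence the total exceeds k * (1/k) = 1 unless G = K_{k,k+1}. *)

Set Implicit Arguments.
Unset Strict Implicit.
Unset Printing Implicit Defensive.

Import Order.TTheory GRing.Theory Num.Theory.

Local Open Scope ring_scope.

Section InverseNat.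

Variable R : numFieldType.

Lemma ler_inv_nat (m n : nat) : (0 < m <= n)%N -> (n%:R^-1 : R) <= m%:R^-1.
Proof.
case/andP=> m_gt0 le_mn.
by rewrite lef_pV2 ?ler_nat // posrE ltr0n // (leq_trans m_gt0).
Qed.

Lemma ltr_inv_nat (m n : nat) : (0 < m < n)%N -> (n%:R^-1 : R) < m%:R^-1.
Proof.
case/andP=> m_gt0 lt_mn.
by rewrite ltf_pV2 ?ltr_nat // posrE ltr0n // (ltn_trans m_gt0).
Qed.

Lemma natr_mul_inv_predn_subV (n : nat) : (1 < n)%N ->
  n%:R * ((n.-1)%:R^-1 - n%:R^-1) = (n.-1)%:R^-1 :> R.
Proof.
case: n => [|[|m]] // _; rewrite -[m.+2]addn1 natrD /=.
by field; rewrite nat1r !natr1 !pnatr_eq0.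
Qed.

Lemma inv_predn_le_sum_subV (I : finType) (S : {set I}) (f : I -> nat) :
  (forall x, x \in S -> 0 < f x < #|S|)%N ->
  ((#|S|.-1)%:R^-1 : R) <= \sum_(x in S) ((f x)%:R^-1 - #|S|%:R^-1).
Proof.
move=> f_range; have [S0|[x xS]] := set_0Vmem S.
  by rewrite S0 cards0 big_set0 invr0.
have S_gt1 : (1 < #|S|)%N by case/andP: (f_range x xS); apply: leq_ltn_trans.
rewrite -{1}(natr_mul_inv_predn_subV S_gt1) mulr_natl -sumr_const.
apply: ler_sum => y yS; rewrite lerD2r ler_inv_nat //.
by case/andP: (f_range y yS) => -> lt_fy; rewrite -ltnS (ltn_predK lt_fy).
Qed.

End InverseNat.

Lemma ltr_sum_of_le_of_lt (R : numDomainType) (I : finType) (S : {set I})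
    (F G : I -> R) (i0 : I) :
  i0 \in S -> F i0 < G i0 -> (forall i, i \in S -> F i <= G i) ->
  \sum_(i in S) F i < \sum_(i in S) G i.
Proof.
move=> i0S lt_FG0 le_FG; rewrite !(bigD1 i0 i0S) /= ltr_leD //.
by apply: ler_sum => i /andP[iS _]; apply: le_FG.
Qed.

Lemma sum_nbhd_const (R : nmodType) (T : finType) (e : rel T) (v : T) (c : R) :
  \sum_(u in nbhd e v) c = c *+ deg e v.
Proof. exact: sumr_const. Qed.

Lemma sum_nbhd_invdeg (R : numFieldType) (T : finType) (e : rel T) (v : T) :
  (0 < deg e v)%N -> \sum_(u in nbhd e v) (deg e v)%:R^-1 = 1 :> R.
Proof.
move=> deg_gt0; rewrite sum_nbhd_const -(mulr_natr (deg e v)%:R^-1).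
by rewrite mulVf // pnatr_eq0 -lt0n.
Qed.

Section Bipartite.

Variables (R : numFieldType) (T : finType) (e : rel T) (A B : {set T}).
Hypotheses (e_sym : symmetric e) (bipAB : bipartition e A B).

Lemma nbhd_sym u v : (u \in nbhd e v) = (v \in nbhd e u).
Proof. by rewrite !inE e_sym. Qed.

Lemma nbhd_subB a : a \in A -> nbhd e a \subset B.
Proof.
by case: bipAB => _ _ bip aA; apply/subsetP => b; rewrite inE => /bip <-.
Qed.

Lemma nbhd_subA b : b \in B -> nbhd e b \subset A.
Proof.
by case: bipAB => _ _ bip bB; apply/subsetP => a; rewrite inE e_sym => /bip ->.
Qed.

Lemma sum_invdeg_nbhd_le_card :
  \sum_(a in A) \sum_(b in nbhd e a) (deg e b)%:R^-1 <= #|B|%:R :> R.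
Proof.
rewrite (exchange_big_dep (mem B)) => [|a b aA]; last exact/subsetP/nbhd_subB.
rewrite -sum1_card natr_sum ler_sum // => b bB.
rewrite (eq_bigl (mem (nbhd e b))) => [|a]; last first.
  by rewrite nbhd_sym andb_idl // => /(subsetP (nbhd_subA bB)).
have [deg0|deg_gt0] := posnP (deg e b).
  by rewrite sum_nbhd_const deg0 ler01.
by rewrite sum_nbhd_invdeg.
Qed.

Section DecreasingDegrees.

Hypothesis degA_gt0 : forall a, a \in A -> (0 < deg e a)%N.
Hypothesis deg_nbhd_lt :
  forall a b, a \in A -> b \in nbhd e a -> (deg e b < deg e a)%N.

Lemma deg_nbhd_range a b :
  a \in A -> b \in nbhd e a -> (0 < deg e b < deg e a)%N.
Proof.
move=> aA ab; rewrite deg_nbhd_lt // andbT.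
by apply/card_gt0P; exists a; rewrite nbhd_sym.
Qed.

Lemma degA_gt1 a : a \in A -> (1 < deg e a)%N.
Proof.
move=> aA; have /card_gt0P[b ab] := degA_gt0 aA.
by case/andP: (deg_nbhd_range aA ab); apply: leq_ltn_trans.
Qed.

Lemma sum_inv_predn_deg_le :
  \sum_(a in A) ((deg e a).-1%:R^-1 : R) <= #|B|%:R - #|A|%:R.
Proof.
apply: le_trans (_ : \sum_(a in A) \sum_(b in nbhd e a)
    ((deg e b)%:R^-1 - (deg e a)%:R^-1) <= _).
  by apply: ler_sum => a aA; apply: inv_predn_le_sum_subV => b; exact: deg_nbhd_range.
under eq_bigr => a aA do rewrite sumrB sum_nbhd_invdeg ?degA_gt0 //.
by rewrite sumrB sumr_const lerD2r sum_invdeg_nbhd_le_card.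
Qed.

End DecreasingDegrees.

End Bipartite.

Local Close Scope ring_scope.

Theorem lemma3p3 (k : nat) (T : finType) (e : rel T) (A B : {set T}) :
  1 <= k ->
  simple_graph e ->
  bipartition e A B ->
  #|A| = k -> #|B| = k.+1 ->
  (forall v, v \in A -> 1 <= deg e v) ->
  (forall v u, v \in A -> u \in nbhd e v -> deg e u < deg e v) ->
  forall a b, a \in A -> b \in B -> e a b.
Proof.
move=> k_gt0 [e_sym _] bipAB cardA cardB degA_gt0 deg_nbhd_lt a0 b0 a0A b0B.
apply/contraT => not_a0b0.
have degA_gt1 := degA_gt1 e_sym degA_gt0 deg_nbhd_lt.
have deg_le a : a \in A -> deg e a <= k.+1.
  by move=> aA; rewrite -cardB subset_leq_card // (nbhd_subB bipAB).
have deg_a0 : deg e a0 <= k.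
  have cardBb0 : #|B :\ b0| = k.
    by move: (cardsD1 b0 B); rewrite b0B cardB add1n => -[].
  rewrite -cardBb0 subset_leq_card //; apply/subsetP => b ab.
  rewrite in_setD1 (subsetP (nbhd_subB bipAB a0A)) // andbT.
  by apply: contraNneq not_a0b0 => <-; move: ab; rewrite inE.
have sum_gt1 : (1 < \sum_(a in A) (deg e a).-1%:R^-1 :> rat)%R.
  have sumV_k : (\sum_(a in A) k%:R^-1 : rat) = 1%R.
    by rewrite sumr_const cardA -(mulr_natr k%:R^-1) mulVf // pnatr_eq0 -lt0n.
  rewrite -{1}sumV_k; apply: (ltr_sum_of_le_of_lt a0A) => [|a aA].
    by apply: ltr_inv_nat; have := degA_gt1 _ a0A; lia.
  by apply: ler_inv_nat; have := degA_gt1 _ aA; have := deg_le _ aA; lia.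
have := sum_inv_predn_deg_le rat e_sym bipAB degA_gt0 deg_nbhd_lt.
by rewrite cardA cardB -natrB // subSnn leNgt sum_gt1.
Qed.
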